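(* Let $(\mathbb S,+,\cdot)$ be an Essential S-Structure. Then $(\mathbb S,+,\cdot)$ is an S-Extension of $(\mathbb S_0,+,\cdot)$ (the operations of $\mathbb S$ restricted to $\mathbb S_0$).
   Context: An S-Structure is a triple $(\mathbb S,+,\cdot)$ where $\mathbb S$ is a set and $+,\cdot$ are binary operations on $\mathbb S$ such that: $(\mathbb S,+)$ is a commutative group with identity $0$ (the inverse of $s$ is written $-s$, and $s-t:=s+(-t)$); $\mathbb S$ is closed under $\cdot$; and there exists $s\in\mathbb S$ with $0\cdot s\neq 0$ or $s\cdot 0\neq 0$. Multiplication binds tighter than addition. The structures considered come with a distinguished element of $\mathbb S$ denoted $1$. It is Commutative if $s\cdot t=t\cdot s$ for all $s,t$. For a Commutative S-Structure and $\alpha\in\mathbb S$, put $\mathbb S_\alpha=\{s\in\mathbb S:0\cdot s=s\cdot 0=\alpha\}$ and $\Lambda=\{\alpha\in\mathbb S:\mathbb S_\alpha\neq\emptyset\}$. Wheel Distributive: $s\cdot(t+r)+(s\cdot 0)=(s\cdot t)+(s\cdot r)$ for all $s,t,r\in\mathbb S$. S-Associative: for all $m,n\in\mathbb S_0$ and $s\in\mathbb S$, $m\cdot(n\cdot s)=(m\cdot n)\cdot s-([(m-1)\cdot(n-1)]\cdot(0\cdot s))$. Base: if $\mathbb S_0\neq\emptyset$ and $\alpha\in\Lambda$, $q\in\mathbb S_\alpha$ is a Base for $\mathbb S_\alpha$ if $q+\beta\in\mathbb S_\alpha$ for all $\beta\in\mathbb S_0$ and every $s\in\mathbb S_\alpha$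 equals $q+\beta$ for some $\beta\in\mathbb S_0$. Coordinated: $\mathbb S_0\neq\emptyset$ and every $\mathbb S_\alpha$ with $\alpha\in\Lambda$ has a Base. Standard Bases: a Coordinated Commutative S-Structure has Standard Bases if there is a specified element $q_0(1)\in\mathbb S_1$ which is a Base for $\mathbb S_1$, and for every $\alpha\in\Lambda$ the element $q_0(\alpha):=\alpha\cdot(q_0(1)+1)-1$ lies in $\mathbb S_\alpha$ and is a Base for $\mathbb S_\alpha$. An Essential S-Structure is an S-Structure that is Commutative, Wheel Distributive, S-Associative, has Standard Bases (in particular is Coordinated), satisfies $0,1\in\mathbb S_0$, and satisfies $\mathbb S_0=\{1\cdot x:x\in\mathbb S_0\}$. S-Extension: $(\mathbb S_F,+,\cdot)$ is an S-Extension of $(F,+_F,\cdot_F)$ if (1) $F$ is closed under $+_F$ and under $\cdot_F$; (2) $(\mathbb S_F,+,\cdot)$ is an S-Structure; (3) there is a set $F_{\mathbb S}\subset\mathbb S_F$ and an isomorphism $\phi:(F,+_F,\cdot_F)\to(F_{\mathbb S},+,\cdot)$ (a bijection preserving both operations). *)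

Set Implicit Arguments.

Section SStruct.
Variables (T : Type) (add : T -> T -> T) (opp : T -> T) (zero : T)
          (mul : T -> T -> T) (one : T).

Definition sub (s t : T) : T := add s (opp t).

Definition SStructure : Prop :=
  (forall a b c, add a (add b c) = add (add a b) c) /\
  (forall a b, add a b = add b a) /\
  (forall a, add a zero = a) /\
  (forall a, add a (opp a) = zero) /\
  (exists s, mul zero s <> zero \/ mul s zero <> zero).

Definition Commutative : Prop := forall s t, mul s t = mul t s.

Definition Salpha (alpha s : T) : Prop := mul zero s = alpha /\ mul s zero = alpha.

Definition Lambda (alpha : T) : Prop := exists s, Salpha alpha s.

Definition WheelDistributive : Prop :=
  forall s t r, add (mul s (add t r)) (mul s zero) = add (mul s t) (mul s r).

Definition SAssociative : Prop :=
  forall m n s, Salpha zero m -> Salpha zero n ->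
    mul m (mul n s) =
    sub (mul (mul m n) s) (mul (mul (sub m one) (sub n one)) (mul zero s)).

Definition IsBase (alpha q : T) : Prop :=
  Salpha alpha q /\
  (forall beta, Salpha zero beta -> Salpha alpha (add q beta)) /\
  (forall s, Salpha alpha s -> exists beta, Salpha zero beta /\ s = add q beta).

Definition Coordinated : Prop :=
  (exists x, Salpha zero x) /\ (forall alpha, Lambda alpha -> exists q, IsBase alpha q).

Definition StandardBases : Prop :=
  exists q01, Salpha one q01 /\ IsBase one q01 /\
    (forall alpha, Lambda alpha ->
       Salpha alpha (sub (mul alpha (add q01 one)) one) /\
       IsBase alpha (sub (mul alpha (add q01 one)) one)).

Definition Essential : Prop :=
  SStructure /\ Commutative /\ WheelDistributive /\ SAssociative /\
  Coordinated /\ StandardBases /\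
  Salpha zero zero /\ Salpha zero one /\
  (forall x, Salpha zero x <-> exists y, Salpha zero y /\ x = mul one y).

(* (T,add,mul) is an S-Extension of (F, addF, mulF), where F is given as a
   subset P of an ambient type U and addF, mulF are operations on U
   (restricted to F). *)
Definition SExtension (U : Type) (P : U -> Prop) (addF mulF : U -> U -> U) : Prop :=
  (forall a b, P a -> P b -> P (addF a b)) /\
  (forall a b, P a -> P b -> P (mulF a b)) /\
  SStructure /\
  exists (FS : T -> Prop) (phi : U -> T),
    (forall x, P x -> FS (phi x)) /\
    (forall x y, P x -> P y -> phi x = phi y -> x = y) /\
    (forall y, FS y -> exists x, P x /\ phi x = y) /\
    (forall x y, P x -> P y -> phi (addF x y) = add (phi x) (phi y)) /\
    (forall x y, P x -> P y -> phi (mulF x y) = mul (phi x) (phi y)).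

End SStruct.


(* S_0 is closed under addition by Wheel Distributivity at s = 0.  For
   multiplication, S-Associativity with m = 0 shows that 0 * (a * b) does not
   depend on b in S_0; taking b = 1 gives 0 * (1 * a), which is 0 because
   1 * a lies in S_0.  The embedding of S_0 into S is then the identity. *)

Lemma SExtension_of_closed (T : Type) (add : T -> T -> T) (opp : T -> T)
    (zero : T) (mul : T -> T -> T) (P : T -> Prop) :
  SStructure add opp zero mul ->
  (forall a b, P a -> P b -> P (add a b)) ->
  (forall a b, P a -> P b -> P (mul a b)) ->
  SExtension add opp zero mul P add mul.
Proof.
  intros HS HPadd HPmul.
  split; [exact HPadd |]. split; [exact HPmul |]. split; [exact HS |].
  exists P, (fun x => x).
  repeat split; auto.
  intros y Py. exists y. auto.
Qed.

Section ZeroClass.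

Variables (T : Type) (add : T -> T -> T) (opp : T -> T) (zero : T)
          (mul : T -> T -> T) (one : T).

Hypothesis addr0 : forall a, add a zero = a.
Hypothesis mulC : Commutative mul.
Hypothesis wheel : WheelDistributive add zero mul.
Hypothesis sassoc : SAssociative add opp zero mul one.

Local Notation S0 := (Salpha zero mul zero).

Hypothesis S0_zero : S0 zero.
Hypothesis S0_one : S0 one.
Hypothesis S0_mul1l : forall a, S0 a -> S0 (mul one a).

Lemma S0_of_mul0l (a : T) : mul zero a = zero -> S0 a.
Proof. intros Ha. split; [exact Ha | rewrite mulC; exact Ha]. Qed.

Lemma S0_add (a b : T) : S0 a -> S0 b -> S0 (add a b).
Proof.
  intros [Ha _] [Hb _]. apply S0_of_mul0l.
  destruct S0_zero as [H00 _].
  pose proof (wheel zero a b) as W.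
  rewrite Ha, Hb, H00, !addr0 in W. exact W.
Qed.

Lemma mul0_mul_S0_indep (a b b' : T) : S0 a -> S0 b -> S0 b' ->
  mul zero (mul a b) = mul zero (mul a b').
Proof.
  intros Sa [Hb _] [Hb' _].
  rewrite (sassoc zero a b S0_zero Sa), (sassoc zero a b' S0_zero Sa).
  destruct Sa as [Ha _]. rewrite Ha, Hb, Hb'. reflexivity.
Qed.

Lemma S0_mul (a b : T) : S0 a -> S0 b -> S0 (mul a b).
Proof.
  intros Sa Sb. apply S0_of_mul0l.
  rewrite (mul0_mul_S0_indep a b one Sa Sb S0_one), (mulC a one).
  apply S0_mul1l. exact Sa.
Qed.

End ZeroClass.

Theorem theorem3p1p2 (T : Type) (add : T -> T -> T) (opp : T -> T) (zero : T)
    (mul : T -> T -> T) (one : T) :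
  Essential add opp zero mul one ->
  SExtension add opp zero mul (Salpha zero mul zero) add mul.
Proof.
  intros [HS [mulC [wheel [sassoc [_ [_ [S0_zero [S0_one S0_iff]]]]]]]].
  pose proof HS as [_ [_ [addr0 _]]].
  assert (S0_mul1l : forall a, Salpha zero mul zero a -> Salpha zero mul zero (mul one a)).
  { intros a Sa. apply S0_iff. exists a. split; [exact Sa | reflexivity]. }
  apply SExtension_of_closed; [exact HS | |]; intros a b.
  - apply S0_add; assumption.
  - eapply S0_mul; eassumption.
Qed.
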